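(* Let $(X,\mu),(Y,\nu)$ be $\sigma$-finite measure spaces and $\varphi\colon\mathcal B(X,\mu)\to\mathcal B(Y,\nu)$ a conformal homomorphism. Then for every $k\in\mathbb N$ and $\varepsilon>0$ there is $\delta>0$ such that for every family $A_1,\dots,A_k$ of measurable subsets of $X$ with $\mu(A_i)\le\delta$ there exists $\lambda>0$ with $|\mu(A_i\cap A_j)-\lambda\nu(\varphi(A_i)\cap\varphi(A_j))|\le\varepsilon\max_{l=1,\dots,k}\mu(A_l)$ for all $i,j=1,\dots,k$.
   Context: A map $\varphi\colon\mathcal B(X,\mu)\to\mathcal B(Y,\nu)$ between measurable sets is a conformal homomorphism if for every $\varepsilon>0$ there is $\delta>0$ such that for all measurable $U,V\subset X$ with $\mu(U),\mu(V)\le\delta$ there is $\lambda>0$ with $|\mu(U)-\lambda\nu(\varphi U)|,\ |\mu(V)-\lambda\nu(\varphi V)|,\ |\mu(U\cap V)-\lambda\nu(\varphi U\cap\varphi V)|$ all at most $\varepsilon\max\{\mu(U),\mu(V)\}$. *)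

From HB Require Import structures.
From mathcomp Require Import all_boot all_order all_algebra.
From mathcomp Require Import all_classical all_reals all_analysis.
Set Implicit Arguments. Unset Strict Implicit. Unset Printing Implicit Defensive.
Import Order.TTheory GRing.Theory Num.Theory.
Local Open Scope classical_set_scope.
Local Open Scope ring_scope.
Local Open Scope ereal_scope.

(* A map phi : B(X,mu) -> B(Y,nu) between measure algebras, represented by a
   map on measurable sets sending measurable sets to measurable sets and
   respecting equality modulo null sets. *)
Definition measure_algebra_map (R : realType) (d1 d2 : measure_display)
  (X : measurableType d1) (Y : measurableType d2)
  (mu : {measure set X -> \bar R}) (nu : {measure set Y -> \bar R})
  (phi : set X -> set Y) : Prop :=
  (forall U, measurable U -> measurable (phi U)) /\
  (forall U V, measurable U -> measurable V ->
     mu (U `\` V) = 0 -> mu (V `\` U) = 0 ->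
     nu (phi U `\` phi V) = 0 /\ nu (phi V `\` phi U) = 0).

Definition conformal_hom (R : realType) (d1 d2 : measure_display)
  (X : measurableType d1) (Y : measurableType d2)
  (mu : {measure set X -> \bar R}) (nu : {measure set Y -> \bar R})
  (phi : set X -> set Y) : Prop :=
  forall eps : R, (0 < eps)%R -> exists2 delta : R, (0 < delta)%R &
    forall U V, measurable U -> measurable V ->
      mu U <= delta%:E -> mu V <= delta%:E ->
      exists2 lam : R, (0 < lam)%R &
        [/\ `| mu U - lam%:E * nu (phi U) | <= eps%:E * maxe (mu U) (mu V),
            `| mu V - lam%:E * nu (phi V) | <= eps%:E * maxe (mu U) (mu V) &
            `| mu (U `&` V) - lam%:E * nu (phi U `&` phi V) |
               <= eps%:E * maxe (mu U) (mu V)].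

From HB Require Import structures.
From mathcomp Require Import all_boot all_order all_algebra.
From mathcomp Require Import all_classical all_reals all_analysis.
From mathcomp Require Import ring lra.
Set Implicit Arguments. Unset Strict Implicit. Unset Printing Implicit Defensive.
Import Order.TTheory GRing.Theory Num.Theory.
Local Open Scope classical_set_scope.
Local Open Scope ring_scope.

(* Fix a set A_m of maximal measure and let lam be the scale the conformal
   property attaches to the pair (A_m, A_m).  Any other scale lam' that is
   good for a pair containing a set T of measure comparable to that of A_m
   agrees with lam up to a factor 1 + O(eps), because both nearly transport
   nu(phi T) to mu(T).  For a pair (A_i, A_j) with mu A_j <= mu A_i we pass
   from lam to the scale of (A_i, A_m) through A_m, then to the scale of
   (A_i, A_j) through A_i; the latter controls mu(A_i & A_j).  The errors
   add up to 25 eps mu(A_m). *)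

Lemma scale_change_estimate (R : realFieldType) (e K T S D1 D2 l1 l2 N N' : R) :
  0 < T -> e <= 1/2 -> 0 <= l1 -> 0 <= N' -> S + D2 <= K * T ->
  `|T - l1 * N| <= e * T -> `|T - l2 * N| <= D1 -> `|S - l1 * N'| <= D2 ->
  `|S - l2 * N'| <= D2 + 2 * K * (e * T + D1).
Proof.
move=> T0 e_half l1_ge0 N'_ge0 SK /ler_normlP[u1 u2] /ler_normlP[v1 v2]
  /ler_normlP[w1 w2].
have w_ge0 : 0 <= l1 * N' by exact: mulr_ge0.
have K_ge0 : 0 <= K by rewrite -(pmulr_lge0 _ T0); lra.
have u_gt0 : 0 < l1 * N by nra.
have uv : `|l1 * N - l2 * N| <= e * T + D1 by apply/ler_normlP; split; lra.
have wK : l1 * N' <= K * T by lra.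
(* l2 * N' = (l2 * N) / (l1 * N) * (l1 * N') *)
have -> : S - l2 * N' = (S - l1 * N') + l1 * N' * (l1 * N - l2 * N) / (l1 * N).
  by field; rewrite -negb_or -mulf_eq0 mulrC gt_eqF.
apply: (le_trans (ler_normD _ _)); apply: lerD; first exact/ler_normlP.
rewrite normrM normfV normrM (ger0_norm w_ge0) (gtr0_norm u_gt0) ler_pdivrMr //.
have eD_ge0 : 0 <= e * T + D1 := le_trans (normr_ge0 _) uv.
have KT : K * T <= 2 * K * (l1 * N) by nra.
have := ler_pM (normr_ge0 _) w_ge0 uv wK.
have := ler_wpM2l eD_ge0 KT.
nra.
Qed.

Lemma rescaled_intersection_estimate (R : realFieldType)
    (e a c M lam lam' lim ni nc nm : R) :
  0 <= e <= 1/2 -> 0 <= c <= a -> a <= M ->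
  0 < lam' -> 0 <= lim -> 0 <= ni -> 0 <= nc ->
  `|a - lam' * ni| <= e * a -> `|c - lam' * nc| <= e * a ->
  `|a - lim * ni| <= e * M -> `|M - lim * nm| <= e * M ->
  `|M - lam * nm| <= e * M ->
  `|c - lam * nc| <= 25 * e * M.
Proof.
move=> /andP[e_ge0 e_half] /andP[c_ge0 ca] aM lam'_gt0 lim_ge0 ni_ge0 nc_ge0
  a_lam' c_lam' a_lim M_lim M_lam.
have [a_gt0|] := ltP 0 a; last first.
  move=> a_le0; have c0 : c = 0 by lra.
  move: c_lam'; rewrite c0 sub0r normrN (_ : a = 0); last by lra.
  rewrite mulr0 normr_le0 mulf_eq0 (gt_eqF lam'_gt0) /= => /eqP->.
  by rewrite mulr0 subr0 normr0; nra.
have a_lam : `|a - lam * ni| <= 7 * e * M.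
  apply: le_trans (scale_change_estimate (K := 3/2) _ e_half lim_ge0 ni_ge0 _
    M_lim M_lam a_lim) _; nra.
apply: le_trans (scale_change_estimate (K := 3/2) a_gt0 e_half (ltW lam'_gt0)
  nc_ge0 _ a_lam' a_lam c_lam') _; nra.
Qed.

Local Open Scope ereal_scope.

Lemma scaled_estimate_fine (R : realType) (x lam z : R) (y : \bar R) :
  (0 < lam)%R -> 0 <= y -> `|x%:E - lam%:E * y| <= z%:E ->
  y = (fine y)%:E /\ (`|x - lam * fine y| <= z)%R.
Proof.
move=> lam_gt0; case: y => [r| |] //= _.
by rewrite mulry gtr0_sg // mul1e /= leye_eq.
Qed.

Section ConformalEstimates.
Variables (R : realType) (d1 d2 : measure_display).
Variables (X : measurableType d1) (Y : measurableType d2).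
Variables (mu : {measure set X -> \bar R}) (nu : {measure set Y -> \bar R}).
Variable phi : set X -> set Y.

Definition conformal_at (eps delta : R) : Prop :=
  forall U V, measurable U -> measurable V ->
    mu U <= delta%:E -> mu V <= delta%:E ->
    exists2 lam : R, (0 < lam)%R &
      [/\ `| mu U - lam%:E * nu (phi U) | <= eps%:E * maxe (mu U) (mu V),
          `| mu V - lam%:E * nu (phi V) | <= eps%:E * maxe (mu U) (mu V) &
          `| mu (U `&` V) - lam%:E * nu (phi U `&` phi V) |
             <= eps%:E * maxe (mu U) (mu V)].

Lemma measure_le_EFin_fine (delta : R) (U : set X) :
  mu U <= delta%:E -> mu U = (fine (mu U))%:E.
Proof.
move=> U_small; rewrite fineK // ge0_fin_numE //.
by apply: le_lt_trans U_small _; rewrite ltry.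
Qed.

Lemma conformal_at_intersection (e delta lam : R) (A B C : set X) :
  conformal_at e delta -> (0 <= e <= 1/2)%R ->
  measurable A -> measurable B -> measurable C ->
  mu A <= delta%:E -> mu B <= delta%:E -> mu C <= delta%:E ->
  mu B <= mu A -> mu A <= mu C ->
  (0 < lam)%R -> `|mu C - lam%:E * nu (phi C)| <= e%:E * mu C ->
  `|mu (A `&` B) - lam%:E * nu (phi A `&` phi B)| <= (25 * e)%:E * mu C.
Proof.
move=> conf e_bounds mA mB mC A_small B_small C_small BA AC lam_gt0 C_lam.
have [lam' lam'_gt0 [A_lam' _ AB_lam']] := conf A B mA mB A_small B_small.
have [lim lim_gt0 [A_lim C_lim _]] := conf A C mA mC A_small C_small.
have mAB : measurable (A `&` B) by exact: measurableI.
have ABA : mu (A `&` B) <= mu A by exact: measureIl.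
have ABE := measure_le_EFin_fine (le_trans ABA A_small).
move: A_lam' AB_lam' A_lim C_lim C_lam BA AC ABA.
rewrite (measure_le_EFin_fine A_small) (measure_le_EFin_fine B_small).
rewrite (measure_le_EFin_fine C_small) ABE.
rewrite -!EFin_max -!EFinM !lee_fin => A_lam' AB_lam' A_lim C_lim C_lam BA AC ABA.
rewrite (max_l BA) in A_lam' AB_lam'; rewrite (max_r AC) in A_lim C_lim.
have [_ A_lam'R] := scaled_estimate_fine lam'_gt0 (measure_ge0 _ _) A_lam'.
have [nuE AB_lam'R] := scaled_estimate_fine lam'_gt0 (measure_ge0 _ _) AB_lam'.
have [_ A_limR] := scaled_estimate_fine lim_gt0 (measure_ge0 _ _) A_lim.
have [_ C_limR] := scaled_estimate_fine lim_gt0 (measure_ge0 _ _) C_lim.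
have [_ C_lamR] := scaled_estimate_fine lam_gt0 (measure_ge0 _ _) C_lam.
rewrite ABE nuE -EFinM -EFinB abse_EFin lee_fin.
apply: rescaled_intersection_estimate A_lam'R AB_lam'R A_limR C_limR C_lamR => //.
- by rewrite ABA andbT fine_ge0.
- exact: ltW.
Qed.

End ConformalEstimates.

Theorem lemma4p3 (R : realType) (d1 d2 : measure_display)
  (X : measurableType d1) (Y : measurableType d2)
  (mu : {measure set X -> \bar R}) (nu : {measure set Y -> \bar R})
  (phi : set X -> set Y) :
  sigma_finite setT mu -> sigma_finite setT nu ->
  measure_algebra_map mu nu phi ->
  conformal_hom mu nu phi ->
  forall (k : nat) (eps : R), (0 < eps)%R ->
  exists2 delta : R, (0 < delta)%R &
    forall A : 'I_k -> set X,
      (forall i, measurable (A i)) ->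
      (forall i, mu (A i) <= delta%:E) ->
      exists2 lam : R, (0 < lam)%R &
        forall i j : 'I_k,
          `| mu (A i `&` A j) - lam%:E * nu (phi (A i) `&` phi (A j)) |
            <= eps%:E * \big[maxe/0]_(l < k) mu (A l).
Proof.
move=> _ _ _ conf k eps eps_gt0.
pose e : R := (Num.min (eps / 25) (1/2))%R.
have e_gt0 : (0 < e)%R by rewrite lt_min; apply/andP; split; lra.
have e_bounds : (0 <= e <= 1/2)%R by rewrite ltW //= ge_min lexx orbT.
have e_eps : (25 * e <= eps)%R.
  have : (e <= eps / 25)%R by rewrite ge_min lexx.
  lra.
have [delta delta_gt0 conf_e] := conf e e_gt0.
exists delta => // A mA A_small.
case: k A mA A_small => [|n] A mA A_small; first by exists 1%R => // -[].
pose m := [arg max_(i > (ord0 : 'I_n.+1)) mu (A i)]%O.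
have A_le_m l : mu (A l) <= mu (A m) by rewrite /m; case: arg_maxP => // i _; apply.
rewrite (bigmax_eq_arg _ ord0) -/m //.
have [lam lam_gt0 [m_lam _ _]] := conf_e _ _ (mA m) (mA m) (A_small m) (A_small m).
rewrite maxxx in m_lam.
exists lam => // i j.
apply: le_trans (_ : (25 * e)%:E * mu (A m) <= _); last exact: lee_wpmul2r.
wlog ji : i j / mu (A j) <= mu (A i).
  move=> est; have [|/ltW ij] := leP (mu (A j)) (mu (A i)); first exact: est.
  by rewrite setIC [phi (A i) `&` _]setIC; exact: est.
exact: conformal_at_intersection conf_e e_bounds (mA i) (mA j) (mA m)
  (A_small i) (A_small j) (A_small m) ji (A_le_m i) lam_gt0 m_lam.
Qed.
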